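(* (1) Let $S$ be a nonempty subset of $\mathbb{Z}$ and let $\mathcal{T}_1\subseteq\mathcal{T}_2\subseteq\mathbb{N}$. Then for all integers $0\le k<|S|$, $k!_{S,\mathcal{T}_1}$ divides $k!_{S,\mathcal{T}_2}$. (2) Let $S_1\subseteq S_2$ be nonempty subsets of $\mathbb{Z}$ and let $\mathcal{T}\subseteq\mathbb{N}$. Then for all integers $0\le k<|S_1|$, $k!_{S_2,\mathcal{T}}$ divides $k!_{S_1,\mathcal{T}}$.
   Context: $\mathbb{N}=\{0,1,2,\dots\}$. For an integer $b\ge0$ and $a\in\mathbb{Z}$ define $\operatorname{ord}_b(a):=\sup\{k\in\mathbb{N}: a\mathbb{Z}\subseteq b^k\mathbb{Z}\}$ (convention $0^0=1$); thus for $b\ge2$ it is the largest $k$ with $b^k\mid a$ ($+\infty$ for $a=0$), $\operatorname{ord}_0(a)=+\infty$ if $a=0$ and $0$ otherwise, and $\operatorname{ord}_1(a)=+\infty$. For nonempty $S\subseteq\mathbb{Z}$, a $b$-ordering of $S$ is a sequence $(a_i)_{i\ge0}$ in $S$ such that for each $i\ge1$, $a_i$ attains $\min_{a'\in S}\sum_{j=0}^{i-1}\operatorname{ord}_b(a'-a_j)$; the $b$-exponent sequence is $\alpha_k(S,b):=\sum_{j=0}^{k-1}\operatorname{ord}_b(a_k-a_j)$ for any $b$-ordering (independent of the choice). For $\mathcal{T}\subseteq\mathbb{N}$ the generalized factorial is $k!_{S,\mathcal{T}}:=\prod_{b\in\mathcal{T}}b^{\alpha_k(S,b)}$, with conventions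 $b^{+\infty}=0$ for $b=0$ and $b\ge2$, $1^{+\infty}=1$, and $b^0=1$ for all $b\in\mathbb{N}$. *)

From HB Require Import structures.
From mathcomp Require Import all_boot all_order all_algebra.
From mathcomp Require Import boolp classical_sets functions cardinality fsbigop.
From Stdlib Require Import ClassicalEpsilon.
Set Implicit Arguments. Unset Strict Implicit. Unset Printing Implicit Defensive.
Import Order.TTheory GRing.Theory Num.Theory.

Local Open Scope classical_set_scope.

(* Extended naturals N u {+oo}: [Some n] = n, [None] = +oo. *)
Definition enat := option nat.

Definition eadd (x y : enat) : enat :=
  match x, y with Some m, Some n => Some (m + n)%N | _, _ => None end.

Definition ele (x y : enat) : bool :=
  match x, y with
  | _, None => true
  | None, Some _ => false
  | Some m, Some n => (m <= n)%N
  end.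

(* ord_b(a) = sup {k in N : aZ \subseteq b^k Z}, written out by cases:
   b = 1 or a = 0 : +oo ;  b = 0, a <> 0 : 0 ;
   b >= 2, a <> 0 : the largest k with b^k | a (such k satisfy k <= |a|). *)
Definition ordb (b : nat) (a : int) : enat :=
  if (b == 1%N) || (a == 0%R) then None
  else if b == 0%N then Some 0%N
  else Some (\max_(k < `|a|%N.+1 | (b ^ k %| `|a|%N)%N) (k : nat)).

Definition ordsum (b : nat) (a : nat -> int) (i : nat) (x : int) : enat :=
  foldr eadd (Some 0%N) [seq ordb b (x - a j)%R | j <- iota 0 i].

Definition is_bordering (S : set int) (b : nat) (a : nat -> int) : Prop :=
  (forall i, S (a i)) /\
  (forall i, (0 < i)%N -> forall x, S x -> ele (ordsum b a i (a i)) (ordsum b a i x)).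

Definition bordering (S : set int) (b : nat) : nat -> int :=
  epsilon (inhabits (fun _ => 0%R)) (is_bordering S b).

Definition alpha (S : set int) (b k : nat) : enat :=
  ordsum b (bordering S b) k (bordering S b k).

(* b ^ e with b^{+oo} = 0 for b = 0 and b >= 2, 1^{+oo} = 1, b^0 = 1 *)
Definition epow (b : nat) (e : enat) : nat :=
  match e with Some n => (b ^ n)%N | None => if b == 1%N then 1%N else 0%N end.

(* k!_{S,T} = prod_{b in T} b^{alpha_k(S,b)}, as a finitely supported product
   (only finitely many factors differ from 1 when k < |S|). *)
Definition gfact (S : set int) (T : set nat) (k : nat) : nat :=
  (\big[muln/1%N]_(b \in T) epow b (alpha S b k))%N.

(* k < |S|, i.e. S contains at least k+1 distinct elements *)
Definition card_gt (S : set int) (k : nat) : Prop :=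
  exists s : seq int, [/\ uniq s, size s = k.+1 & forall x, x \in s -> S x].

(* For b >= 2 the cost sum_j ord_b(x - a_j) of a point x splits along residue
   classes mod b: the a_j incongruent to x contribute 0, the congruent ones
   contribute 1 each plus the cost of x div b against the quotients a_j div b,
   which is a cost of the same kind for the quotient set of that class.
   Induction on the cost then shows that a greedy sequence (a prefix of a
   b-ordering) of S maximises the minimal cost over S among all sequences of
   its length: pigeonhole a class where the competitor A has fewer points,
   take the last greedy point e in it, whose cost is at most the last cost,
   and recurse on the quotient of that class.  With A a prefix of a b-ordering
   of S2, this gives alpha_k(S2, b) <= alpha_k(S1, b) whenever S1 ⊆ S2.
   For b = 0 the exponent is 0 as soon as k < |S|, for b = 1 every factor is 1,
   and once b exceeds twice the largest |x| among k+1 points of S, one of them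
   is incongruent to all of a_0, ..., a_(k-1), so alpha_k(S, b) = 0.  Hence the
   product defining k!_(S,T) is finite and both divisibilities hold factor by
   factor. *)

From HB Require Import structures.
From mathcomp Require Import all_boot all_order all_algebra.
From mathcomp Require Import boolp classical_sets fsbigop.
From Stdlib Require Import ClassicalEpsilon.
From mathcomp Require Import zify ring.
Set Implicit Arguments. Unset Strict Implicit. Unset Printing Implicit Defensive.
Import Order.TTheory GRing.Theory Num.Theory.
Local Open Scope classical_set_scope.

Lemma eadd0 x : eadd (Some 0) x = x.
Proof. by case: x. Qed.

Lemma eaddA : associative eadd.
Proof. by case=> [m|] [n|] [p|] //=; rewrite addnA. Qed.

Lemma ele_refl x : ele x x.
Proof. by case: x => /=. Qed.

Lemma ele_trans y x z : ele x y -> ele y z -> ele x z.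
Proof. by case: x => [m|]; case: y => [n|]; case: z => [p|] //=; apply: leq_trans. Qed.

Lemma ele_none x : ele x None.
Proof. by case: x. Qed.

Lemma ele_addr x y : ele x (eadd x y).
Proof. by case: x => [m|]; case: y => [n|] //=; rewrite leq_addr. Qed.

Lemma ele_add2l c x y : ele (eadd (Some c) x) (eadd (Some c) y) = ele x y.
Proof. by case: x => [m|]; case: y => [n|] //=; rewrite leq_add2l. Qed.

Lemma ele_some0 x : ele x (Some 0) -> x = Some 0.
Proof. by case: x => [[]|]. Qed.

Lemma count_map_mem (T U : eqType) (f : T -> U) (V : seq U) (s : seq T) : uniq V ->
  count (fun y => f y \in V) s = \sum_(v <- V) count (fun y => f y == v) s.
Proof.
elim: V => [_|v V IH /andP [vV uV]]; first by rewrite big_nil; elim: s.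
rewrite big_cons -IH // -count_predUI (@eq_count _ (predI _ _) pred0) ?count_pred0 ?addn0.
  by apply: eq_count => y; rewrite /= in_cons.
by move=> y /=; apply/andP => -[/eqP ->]; apply/negP.
Qed.

Lemma exists_fiber_count_lt (T U : eqType) (f : T -> U) (A G : seq T) :
  size A < size G ->
  exists2 g, g \in G & count (fun y => f y == f g) A < count (fun y => f y == f g) G.
Proof.
move=> ltAG; apply/hasP; apply: contraTT ltAG => /hasPn fibers_le; rewrite -leqNgt.
set V := undup (map f G).
have -> : size G = count (fun y => f y \in V) G.
  by rewrite -count_predT; apply: eq_in_count => y yG; rewrite mem_undup map_f.
apply: leq_trans (count_size (fun y => f y \in V) A).
rewrite !count_map_mem ?undup_uniq // big_seq [leqRHS]big_seq; apply: leq_sum => v.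
by rewrite mem_undup => /mapP [g gG ->]; rewrite leqNgt; apply: fibers_le.
Qed.

Lemma exists_notin_map (T U : eqType) (f : T -> U) (s A : seq T) :
  uniq (map f s) -> size A < size s -> exists2 x, x \in s & f x \notin map f A.
Proof.
move=> uniq_fs ltAs; apply/hasP; apply: contraTT ltAs => /hasPn fs_in_fA.
rewrite -leqNgt -(size_map f s) -(size_map f A); apply: uniq_leq_size uniq_fs _.
by move=> _ /mapP [x xs ->]; apply/negbNE/fs_in_fA.
Qed.

Lemma last_occurrence (T : Type) (p : pred T) s : has p s ->
  exists P e Q, [/\ s = P ++ e :: Q, p e & ~~ has p Q].
Proof.
elim/last_ind: s => [|s y IH] //; rewrite has_rcons.
case: (boolP (p y)) => [py _ | npy /= /IH [P [e [Q [-> pe nQ]]]]].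
  by exists s, y, [::]; rewrite cats1.
by exists P, e, (rcons Q y); rewrite rcons_cat rcons_cons has_rcons (negbTE npy).
Qed.

Lemma dvdn_prod (I : Type) (r : seq I) (P : pred I) (F G : I -> nat) :
  (forall i, P i -> F i %| G i) -> \prod_(i <- r | P i) F i %| \prod_(i <- r | P i) G i.
Proof. by move=> FG; apply: (@big_ind2 _ _ (fun x y => x %| y)) => // *; apply: dvdn_mul. Qed.

Lemma enat_argmin (T : Type) (S : set T) (f : T -> enat) : S !=set0 ->
  exists2 x, S x & forall y, S y -> ele (f x) (f y).
Proof.
move=> [y0 Sy0].
have [[m [y Sy fy]]|no_finite] := pselect (exists m, exists2 y, S y & f y = Some m).
  pose P m := `[< exists2 y, S y & f y = Some m >].
  have [n /asboolP [x Sx fx] n_min] := ex_minnP (ex_intro P m (asboolT (ex_intro2 _ _ y Sy fy))).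
  exists x => // z Sz; rewrite fx; case fz: (f z) => [p|] //=.
  by apply: n_min; apply/asboolP; exists z.
exists y0 => // z Sz; case fz: (f z) => [p|]; last exact: ele_none.
by case: no_finite; exists p, z.
Qed.

Definition cost (b : nat) (s : seq int) (x : int) : enat :=
  foldr eadd (Some 0) [seq ordb b (x - a)%R | a <- s].

Section Cost.
Variable b : nat.

Lemma cost_cons y s x : cost b (y :: s) x = eadd (ordb b (x - y)%R) (cost b s x).
Proof. by []. Qed.

Lemma cost_cat s t x : cost b (s ++ t) x = eadd (cost b s x) (cost b t x).
Proof. by elim: s => [|y s IH]; rewrite ?eadd0 // cat_cons !cost_cons IH eaddA. Qed.

Lemma cost_eq0 s x : (forall a, a \in s -> ordb b (x - a)%R = Some 0) -> cost b s x = Some 0.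
Proof.
elim: s => [|y s IH] // terms0; rewrite cost_cons terms0 ?mem_head // IH //.
by move=> a a_s; apply: terms0; rewrite in_cons a_s orbT.
Qed.

Inductive greedy (S : set int) : seq int -> Prop :=
| greedy_nil : greedy S [::]
| greedy_rcons s y : greedy S s -> S y ->
    (forall x, S x -> ele (cost b s y) (cost b s x)) -> greedy S (rcons s y).

Lemma greedy_rcons_inv S s y : greedy S (rcons s y) ->
  [/\ greedy S s, S y & forall x, S x -> ele (cost b s y) (cost b s x)].
Proof.
move E: (rcons s y) => t g; case: g E => [|s' y' gs' Sy' y'min]; first by case: s.
by case/rcons_inj => -> ->.
Qed.

Lemma greedy_catl S s t : greedy S (s ++ t) -> greedy S s.
Proof.
elim/last_ind: t => [|t y IH]; first by rewrite cats0.
by rewrite -rcons_cat => /greedy_rcons_inv [/IH].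
Qed.

Lemma greedy_mem S s x : greedy S s -> x \in s -> S x.
Proof.
elim/last_ind: s => [|s y IH] // /greedy_rcons_inv [gs Sy _].
by rewrite mem_rcons in_cons => /orP [/eqP -> | /(IH gs)].
Qed.

Lemma greedy_cost_le S s y P e Q : greedy S (rcons s y) -> rcons s y = P ++ e :: Q ->
  ele (cost b P e) (cost b s y).
Proof.
move=> gsy; case/lastP: Q => [|Q z].
  by rewrite cats1 => /rcons_inj [-> ->]; apply: ele_refl.
rewrite -rcons_cons -rcons_cat => /rcons_inj [s_eq _].
have [gs Sy _] := greedy_rcons_inv gsy.
rewrite s_eq -cat_rcons in gs *.
have [_ _ e_min] := greedy_rcons_inv (greedy_catl gs).
by apply: ele_trans (e_min y Sy) _; rewrite -cats1 -catA cost_cat ele_addr.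
Qed.

End Cost.

Section ResidueClasses.
Variable b : nat.
Hypothesis b_gt1 : 1 < b.

Lemma ordb_exact a n : a != 0%R -> b ^ n %| `|a| -> ~~ (b ^ n.+1 %| `|a|) ->
  ordb b a = Some n.
Proof.
move=> a0 dvd_n ndvd_Sn; rewrite /ordb (negbTE a0) orbF.
rewrite gtn_eqF // (gtn_eqF (ltnW b_gt1)); congr Some; apply/eqP; rewrite eqn_leq.
apply/andP; split.
  apply/bigmax_leqP => i dvd_i; rewrite leqNgt; apply: contra ndvd_Sn => lt_ni.
  by apply: dvdn_trans dvd_i; apply: dvdn_exp2l.
have n_lt : n < `|a|.+1.
  rewrite ltnS; apply: leq_trans (ltnW (ltn_expl n b_gt1)) (dvdn_leq _ dvd_n).
  by rewrite absz_gt0.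
exact: (@leq_bigmax_cond _ (fun k : 'I_(`|a|.+1) => b ^ k %| `|a|) _ (Ordinal n_lt)).
Qed.

Lemma ordb_indivisible a : ~~ (b %| `|a|) -> ordb b a = Some 0.
Proof.
move=> ndvd; apply: ordb_exact; rewrite ?expn0 ?dvd1n ?expn1 //.
by apply: contraNneq ndvd => ->; rewrite dvdn0.
Qed.

Lemma ordb_mulb z : ordb b (z * b%:Z)%R = eadd (Some 1) (ordb b z).
Proof.
have [->|z0] := eqVneq z 0%R; first by rewrite mul0r /ordb eqxx !orbT.
have dvd_ub k : b ^ k %| `|z| -> k <= `|z|.
  move=> dvd_k; apply/ltnW/(leq_trans (ltn_expl k b_gt1)).
  by apply: dvdn_leq dvd_k; rewrite absz_gt0.
have [n dvd_n n_max] := ex_maxnP (ex_intro (fun k => b ^ k %| `|z|) 0 (dvd1n _)) dvd_ub.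
have ndvd_Sn : ~~ (b ^ n.+1 %| `|z|) by apply/negP => /n_max; rewrite ltnn.
rewrite (ordb_exact z0 dvd_n ndvd_Sn); apply: ordb_exact.
- by rewrite mulf_neq0 // eqz_nat -lt0n ltnW.
- by rewrite abszM expnSr dvdn_pmul2r // ltnW.
- by rewrite abszM expnSr dvdn_pmul2r // ltnW.
Qed.

Lemma subz_same_class x y : (x %% b)%Z = (y %% b)%Z ->
  (x - y = ((x %/ b)%Z - (y %/ b)%Z) * b%:Z)%R.
Proof. by move=> eq_mod; rewrite {1}(divz_eq x b) {1}(divz_eq y b) eq_mod; ring. Qed.

Lemma ordb_diff_class x y : (x %% b)%Z != (y %% b)%Z -> ordb b (x - y)%R = Some 0.
Proof.
move=> ne; apply: ordb_indivisible; apply: contra ne => dvd_b.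
by rewrite eqz_mod_dvd dvdzE.
Qed.

Definition in_class (r y : int) : bool := (y %% b)%Z == r.

Definition quo_seq (r : int) (s : seq int) : seq int :=
  [seq (y %/ b)%Z | y <- s & in_class r y].

Definition class_quotient (S : set int) (r : int) : set int :=
  [set (x %/ b)%Z | x in [set x | S x /\ (x %% b)%Z = r]].

Lemma size_quo_seq r s : size (quo_seq r s) = count (in_class r) s.
Proof. by rewrite size_map size_filter. Qed.

Lemma cost_split r s x : (x %% b)%Z = r ->
  cost b s x = eadd (Some (count (in_class r) s)) (cost b (quo_seq r s) (x %/ b)%Z).
Proof.
move=> xr; elim: s => [|y s IH] //; rewrite cost_cons IH /quo_seq /= -/(quo_seq r s).
case: ifP => [/eqP yr | ynr].
  rewrite cost_cons subz_same_class ?xr ?yr // ordb_mulb.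
  by case: (ordb b _) => [m|]; case: (cost b _ _) => [p|] //=; congr Some; lia.
by rewrite ordb_diff_class ?eadd0 // xr; apply/negP => /eqP yr; rewrite /in_class yr eqxx in ynr.
Qed.

Lemma greedy_quo_seq S r s : greedy b S s -> greedy b (class_quotient S r) (quo_seq r s).
Proof.
elim/last_ind: s => [|s y IH] gsy; first exact: greedy_nil.
have [gs Sy y_min] := greedy_rcons_inv gsy.
rewrite /quo_seq filter_rcons; case: ifP => [/eqP yr | _]; last exact: IH.
rewrite map_rcons; apply: greedy_rcons; [exact: IH | by exists y | ].
move=> _ [x [Sx xr] <-]; have := y_min x Sx.
by rewrite (cost_split s yr) (cost_split s xr) ele_add2l.
Qed.

Lemma exists_sparse_class s y A : size A <= size s ->
  exists r P e Q, [/\ rcons s y = P ++ e :: Q, (e %% b)%Z = r &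
                      count (in_class r) A <= count (in_class r) P].
Proof.
move=> szA; have [g _ lt_count] : exists2 g, g \in rcons s y &
    count (in_class (g %% b)%Z) A < count (in_class (g %% b)%Z) (rcons s y).
  by apply: (exists_fiber_count_lt (fun z => (z %% b)%Z)); rewrite size_rcons ltnS.
set r := (g %% b)%Z in lt_count.
have [|P [e [Q [sy_eq re nQ]]]] := @last_occurrence _ (in_class r) (rcons s y).
  by rewrite has_count (leq_ltn_trans _ lt_count).
exists r, P, e, Q; split => //; first exact/eqP.
have count_Q : count (in_class r) Q = 0 by apply/eqP; rewrite eqn0Ngt -has_count.
by move: lt_count; rewrite sy_eq count_cat /= re count_Q addn1 ltnS.
Qed.

Lemma greedy_cost_max S s y A : greedy b S (rcons s y) -> size A <= size s ->
  exists2 x, S x & ele (cost b A x) (cost b s y).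
Proof.
move=> gsy; case cost_y: (cost b s y) => [n|]; last first.
  by exists y; [case: (greedy_rcons_inv gsy) | exact: ele_none].
elim/ltn_ind: n S s y A gsy cost_y => n IH S s y A gsy cost_y szA.
have [r [P [e [Q [sy_eq er le_count]]]]] := exists_sparse_class y szA.
have cost_e := greedy_cost_le gsy sy_eq; rewrite cost_y (cost_split P er) in cost_e.
set cA := count (in_class r) A in le_count *.
have [cA0|cA_gt0] := posnP cA.
  exists e; first by apply: (greedy_mem gsy); rewrite sy_eq mem_cat mem_head orbT.
  rewrite (cost_split A er) -/cA cA0.
  by have /size0nil -> : size (quo_seq r A) = 0 by rewrite size_quo_seq.
case cost_e' : (cost b (quo_seq r P) (e %/ b)%Z) cost_e => [n'|] //= le_n.
have gPe : greedy b S (rcons P e) by apply: (@greedy_catl _ _ _ Q); rewrite cat_rcons -sy_eq.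
have := greedy_quo_seq r gPe; rewrite /quo_seq filter_rcons /in_class er eqxx map_rcons => gP.
have [||_ [x [Sx xr] <-] cost_x] := IH n' _ _ _ _ (quo_seq r A) gP cost_e'.
- by move: le_n; lia.
- by rewrite !size_quo_seq.
exists x => //; rewrite (cost_split A xr) -/cA.
by move: cost_x; case: (cost b _ _) => [m|] //= le_m; lia.
Qed.

End ResidueClasses.

Lemma ordsum_cost b a i x : ordsum b a i x = cost b (mkseq a i) x.
Proof. by rewrite /ordsum /cost /mkseq -map_comp. Qed.

Lemma bordering_min S b a k x : is_bordering S b a -> S x ->
  ele (cost b (mkseq a k) (a k)) (cost b (mkseq a k) x).
Proof.
case=> _ a_min Sx; case: k => [|k]; first by case: (cost b _ x).
by rewrite -!ordsum_cost; apply: a_min.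
Qed.

Lemma bordering_greedy S b a n : is_bordering S b a -> greedy b S (mkseq a n).
Proof.
move=> a_ord; elim: n => [|n IH]; first exact: greedy_nil.
rewrite mkseqS; apply: greedy_rcons => //; first by case: a_ord.
by move=> x; apply: bordering_min.
Qed.

Lemma bordering_spec S b : S !=set0 -> is_bordering S b (bordering S b).
Proof.
move=> S0; apply: epsilon_spec.
have [next next_min] : {next : seq int -> int & forall s, S (next s) /\
    forall y, S y -> ele (cost b s (next s)) (cost b s y)}.
  apply: (@boolp.choice _ _ (fun s x => S x /\ forall y, S y -> ele (cost b s x) (cost b s y))).
  by move=> s; have [x Sx x_min] := enat_argmin (cost b s) S0; exists x.
pose a i := next (iter i (fun s => rcons s (next s)) [::]).
have mkseq_a n : mkseq a n = iter n (fun s => rcons s (next s)) [::].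
  by elim: n => //= n IH; rewrite mkseqS IH.
exists a; split => [i | i _ x Sx]; first exact: (next_min _).1.
by rewrite !ordsum_cost mkseq_a; apply: (next_min _).2.
Qed.

Lemma alpha_le_cost S b k x : S x ->
  ele (alpha S b k) (cost b (mkseq (bordering S b) k) x).
Proof.
move=> Sx; have S0 : S !=set0 by exists x.
by rewrite /alpha ordsum_cost; apply: bordering_min (bordering_spec b S0) Sx.
Qed.

Lemma alpha_eq0 S b k x : S x ->
  (forall a, a \in mkseq (bordering S b) k -> ordb b (x - a)%R = Some 0) ->
  alpha S b k = Some 0.
Proof. by move=> Sx /cost_eq0 cost0; apply: ele_some0; rewrite -cost0 alpha_le_cost. Qed.

Lemma alpha_le_subset S1 S2 b k : 1 < b -> S1 `<=` S2 -> S1 !=set0 ->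
  ele (alpha S2 b k) (alpha S1 b k).
Proof.
move=> b_gt1 S12 S1_0.
have := bordering_greedy k.+1 (bordering_spec b S1_0); rewrite mkseqS => g1.
have [|x S1x cost_x] := greedy_cost_max b_gt1 (A := mkseq (bordering S2 b) k) g1.
  by rewrite !size_mkseq.
by apply: ele_trans (alpha_le_cost _ _ (S12 _ S1x)) _; rewrite /alpha ordsum_cost.
Qed.

Lemma card_gt_subset S1 S2 k : S1 `<=` S2 -> card_gt S1 k -> card_gt S2 k.
Proof. by move=> S12 [s [us sz sS]]; exists s; split => // x /sS /S12. Qed.

Lemma alpha0 S k : card_gt S k -> alpha S 0 k = Some 0.
Proof.
case=> s [us sz sS].
have [||x xs xA] := exists_notin_map (f := id) (s := s) (A := mkseq (bordering S 0) k).
- by rewrite map_id.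
- by rewrite size_mkseq sz.
rewrite map_id in xA.
apply: (alpha_eq0 (x := x)) => [|a aA]; first exact: sS.
by rewrite /ordb subr_eq0 /=; case: (x =P a) => // xa; rewrite xa aA in xA.
Qed.

Lemma modz_inj_small (b : nat) x y : `|(x - y)%R| < b -> (x %% b)%Z = (y %% b)%Z -> x = y.
Proof.
move=> lt_b /eqP; rewrite eqz_mod_dvd dvdzE /= => dvd_b.
apply/eqP; rewrite -subr_eq0 -absz_eq0; apply: contraTT lt_b => nz.
by rewrite -leqNgt dvdn_leq // lt0n.
Qed.

Lemma alpha_eventually0 S k : card_gt S k -> exists N, forall b, N <= b -> alpha S b k = Some 0.
Proof.
case=> s [us sz sS]; set M := \max_(x <- s) `|x|%N.
have le_M x : x \in s -> `|x|%N <= M by move=> xs; exact: (@leq_bigmax_seq _ s xpredT).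
exists M.*2.+2 => b le_b; have b_gt1 : 1 < b by apply: leq_trans le_b.
have mod_inj : {in s &, injective (fun x => (x %% b)%Z)}.
  move=> x y xs ys; apply: modz_inj_small; apply: leq_ltn_trans (leqD_dist x 0 y) _.
  rewrite subr0 sub0r abszN; apply: leq_ltn_trans (leq_add (le_M x xs) (le_M y ys)) _.
  by rewrite addnn; apply: leq_trans le_b.
have [||g gs gA] :=
  exists_notin_map (f := fun x => (x %% b)%Z) (s := s) (A := mkseq (bordering S b) k).
- by rewrite map_inj_in_uniq.
- by rewrite size_mkseq sz.
apply: (alpha_eq0 (sS _ gs)) => a aA; apply: ordb_diff_class => //.
by apply: contraNneq gA => ga; rewrite ga; apply: map_f.
Qed.

Lemma gfact_iota S k : card_gt S k -> exists N, forall T n, N <= n ->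
  gfact S T k = \prod_(b <- iota 0 n | b \in T) epow b (alpha S b k).
Proof.
move=> Sk; have [N alphaN] := alpha_eventually0 Sk; exists N => T n le_Nn.
rewrite /gfact (bigfs _ (iota_uniq 0 n)) ?set_mem_set // => b _.
by rewrite mem_iota /= add0n -leqNgt => le_nb; rewrite alphaN // (leq_trans le_Nn).
Qed.

Lemma epow_dvd b e1 e2 : ele e1 e2 -> epow b e1 %| epow b e2.
Proof.
case: e1 => [m|]; case: e2 => [n|] //= le_mn; first exact: dvdn_exp2l.
by case: eqP => [->|_]; rewrite ?exp1n ?dvdn0.
Qed.

Lemma epow_alpha_dvd_subset S1 S2 b k : S1 !=set0 -> S1 `<=` S2 -> card_gt S1 k ->
  epow b (alpha S2 b k) %| epow b (alpha S1 b k).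
Proof.
move=> S1_0 S12 S1k; case: b => [|[|b]].
- by rewrite (alpha0 (card_gt_subset S12 S1k)).
- by case: (alpha S2 1 k) => [m|]; rewrite /= ?exp1n dvd1n.
- exact/epow_dvd/alpha_le_subset.
Qed.

Theorem proposition3p10 :
  (forall (S : set int) (T1 T2 : set nat),
      S !=set0 -> T1 `<=` T2 ->
      forall k : nat, card_gt S k -> (gfact S T1 k %| gfact S T2 k)%N) /\
  (forall (S1 S2 : set int) (T : set nat),
      S1 !=set0 -> S1 `<=` S2 ->
      forall k : nat, card_gt S1 k -> (gfact S2 T k %| gfact S1 T k)%N).
Proof.
split=> [S T1 T2 _ T12 k Sk | S1 S2 T S1_0 S12 k S1k].
  have [N gfactN] := gfact_iota Sk.
  rewrite !(gfactN _ N) // !(big_mkcond (fun b => b \in _)); apply: dvdn_prod => b _.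
  by case: ifP => [/set_mem/T12/mem_set -> // | _]; rewrite dvd1n.
have [N1 gfact1] := gfact_iota S1k; have [N2 gfact2] := gfact_iota (card_gt_subset S12 S1k).
rewrite (gfact1 _ (maxn N1 N2)) ?leq_maxl // (gfact2 _ (maxn N1 N2)) ?leq_maxr //.
by apply: dvdn_prod => b _; apply: epow_alpha_dvd_subset.
Qed.
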